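(* Let $R$ be a left (respectively right) Noetherian domain and let $A$ be a bijective skew PBW extension of $R$. Then $A$ is a left (respectively right) Ore domain; hence the left (respectively right) division ring of fractions of $A$ exists.
   Context: Rings are associative with identity. Skew PBW extension. Let $R$ and $A$ be rings. $A$ is a skew PBW extension of $R$, written $A=\sigma(R)\langle x_1,\dots,x_n\rangle$, if the following hold. (i) $R\subseteq A$. (ii) There are $x_1,\dots,x_n\in A$ such that $A$ is a free left $R$-module with basis $\{x_1^{\alpha_1}\cdots x_n^{\alpha_n}:\alpha\in\mathbb N^n\}$. (iii) For each $i$ and each $r\in R\setminus\{0\}$ there is $c_{i,r}\in R\setminus\{0\}$ with $x_ir-c_{i,r}x_i\in R$. (iv) For all $i,j$ there is $c_{i,j}\in R\setminus\{0\}$ with $x_jx_i-c_{i,j}x_ix_j\in R+Rx_1+\dots+Rx_n$. There are injective endomorphisms $\sigma_i$ of $R$ and $\sigma_i$-derivations $\delta_i$ with $x_ir=\sigma_i(r)x_i+\delta_i(r)$ for all $r\in R$. $A$ is bijective if all $\sigma_i$ are bijective and all $c_{i,j}$ ($i<j$) are invertible. A domain $D$ is a left Ore domain if for all $a,b\in D$ with $b\neq 0$ there exist $p\neq 0$ and $q$ in $D$ with $pa=qb$. Right Ore domains are defined symmetrically. *)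

From HB Require Import structures.
From mathcomp Require Import all_boot all_order all_algebra.
Set Implicit Arguments. Unset Strict Implicit. Unset Printing Implicit Defensive.
Import GRing.Theory.
Local Open Scope ring_scope.

Definition is_domain (D : nzRingType) : Prop :=
  forall a b : D, a * b = 0 -> a = 0 \/ b = 0.

Definition invertible (D : nzRingType) (c : D) : Prop :=
  exists u : D, c * u = 1 /\ u * c = 1.

Definition left_ideal (D : nzRingType) (I : D -> Prop) : Prop :=
  I 0 /\ (forall a b, I a -> I b -> I (a + b)) /\ (forall r a, I a -> I (r * a)).
Definition right_ideal (D : nzRingType) (I : D -> Prop) : Prop :=
  I 0 /\ (forall a b, I a -> I b -> I (a + b)) /\ (forall r a, I a -> I (a * r)).

Definition left_noetherian (D : nzRingType) : Prop :=
  forall I : nat -> D -> Prop,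
    (forall k, left_ideal (I k)) ->
    (forall k a, I k a -> I k.+1 a) ->
    exists N, forall m, (N <= m)%N -> forall a, I m a <-> I N a.
Definition right_noetherian (D : nzRingType) : Prop :=
  forall I : nat -> D -> Prop,
    (forall k, right_ideal (I k)) ->
    (forall k a, I k a -> I k.+1 a) ->
    exists N, forall m, (N <= m)%N -> forall a, I m a <-> I N a.

Definition left_ore_domain (D : nzRingType) : Prop :=
  is_domain D /\
  forall a b : D, b <> 0 -> exists p q : D, p <> 0 /\ p * a = q * b.
Definition right_ore_domain (D : nzRingType) : Prop :=
  is_domain D /\
  forall a b : D, b <> 0 -> exists p q : D, p <> 0 /\ a * p = b * q.

Definition monomial (A : nzRingType) (n : nat) (x : 'I_n -> A)
    (alpha : {ffun 'I_n -> nat}) : A :=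
  \prod_(i < n) x i ^+ alpha i.

(* Skew PBW extension A = sigma(R)<x_1,...,x_n>, the inclusion R ⊆ A being
   the injective ring morphism iota. *)
Definition skew_PBW (R A : nzRingType) (iota : {rmorphism R -> A}) (n : nat)
    (x : 'I_n -> A) : Prop :=
  injective iota /\
  (forall a : A, exists (s : seq {ffun 'I_n -> nat}) (c : {ffun 'I_n -> nat} -> R),
      uniq s /\ a = \sum_(alpha <- s) iota (c alpha) * monomial x alpha) /\
  (forall (s : seq {ffun 'I_n -> nat}) (c : {ffun 'I_n -> nat} -> R),
      uniq s -> \sum_(alpha <- s) iota (c alpha) * monomial x alpha = 0 ->
      forall alpha, alpha \in s -> c alpha = 0) /\
  (forall (i : 'I_n) (r : R), r <> 0 ->
      exists c d : R, c <> 0 /\ x i * iota r - iota c * x i = iota d) /\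
  (forall i j : 'I_n,
      exists (c d0 : R) (d : 'I_n -> R), c <> 0 /\
        x j * x i - iota c * x i * x j = iota d0 + \sum_(k < n) iota (d k) * x k).

(* Bijective skew PBW extension: the endomorphisms sigma_i (with
   x_i r = sigma_i(r) x_i + delta_i(r)) are bijective, and the constants
   c_{i,j} (i < j) of (iv) are invertible.  sigma_i, delta_i and c_{i,j} are
   uniquely determined by freeness, so they are quantified existentially. *)
Definition bijective_skew_PBW (R A : nzRingType) (iota : {rmorphism R -> A})
    (n : nat) (x : 'I_n -> A) : Prop :=
  skew_PBW iota x /\
  (exists sigma delta : 'I_n -> R -> R,
      (forall i r, x i * iota r = iota (sigma i r) * x i + iota (delta i r)) /\
      (forall i, bijective (sigma i))) /\
  (forall i j : 'I_n, (i < j)%N ->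
      exists (c d0 : R) (d : 'I_n -> R), invertible c /\
        x j * x i - iota c * x i * x j = iota d0 + \sum_(k < n) iota (d k) * x k).

From HB Require Import structures.
From mathcomp Require Import all_boot all_order all_algebra.
From mathcomp Require Import zify.
From Stdlib Require Import ClassicalEpsilon.
Set Implicit Arguments. Unset Strict Implicit. Unset Printing Implicit Defensive.
Import GRing.Theory.

(* Order the standard monomials x^g degree-lexicographically.  Because every
   c_(i,j) is nonzero and every sigma_i injective, x^g (r x^h) has leading term
   t x^(g+h) with t <> 0 whenever r <> 0; comparing leading terms shows that A
   is a domain.  A left Noetherian domain R is left Ore (the left ideals
   R b + ... + R b a^k stabilise), and the Ore condition lifts to A by counting:
   the monomials of degree <= m grow polynomially in m, so for a suitable m the
   2N products x^g a, x^g b (deg g <= m) lie in the R-span of fewer than 2N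
   monomials; a nontrivial left dependence over R gives p a = q b with p <> 0.
   The right-handed statement is the left one for R^c in A^c, which is again a
   skew PBW extension in the variables x_n, ..., x_1: bijectivity of the
   sigma_i is what makes the monomials a basis of A as a right R-module. *)

(** * Exponent vectors and the degree-lexicographic order *)

Section Exponents.
Variable n : nat.
Local Notation mono := {ffun 'I_n -> nat}.
Implicit Types (g h f : mono).

Definition madd g h : mono := [ffun k => (g k + h k)%N].
Definition m0 : mono := [ffun => 0%N].
Definition mvar (i : 'I_n) : mono := [ffun k => nat_of_bool (k == i)].
Definition mdeg g : nat := (\sum_(k < n) g k)%N.

Definition lexlt g h : bool :=
  [exists i : 'I_n, (g i < h i)%N && [forall k : 'I_n, (k < i)%N ==> (g k == h k)]].
Definition ltm g h : bool :=
  (mdeg g < mdeg h)%N || ((mdeg g == mdeg h) && lexlt g h).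
Definition lem g h : bool := (g == h) || ltm g h.

Lemma maddC g h : madd g h = madd h g.
Proof. by apply/ffunP=> k; rewrite !ffunE addnC. Qed.
Lemma maddA g h f : madd g (madd h f) = madd (madd g h) f.
Proof. by apply/ffunP=> k; rewrite !ffunE addnA. Qed.
Lemma madd0m g : madd m0 g = g.
Proof. by apply/ffunP=> k; rewrite !ffunE. Qed.
Lemma maddm0 g : madd g m0 = g.
Proof. by apply/ffunP=> k; rewrite !ffunE addn0. Qed.

Lemma mdegD g h : mdeg (madd g h) = (mdeg g + mdeg h)%N.
Proof. by rewrite /mdeg -big_split /=; apply: eq_bigr => k _; rewrite ffunE. Qed.
Lemma mdeg0 : mdeg m0 = 0%N.
Proof. by rewrite /mdeg big1 // => k _; rewrite ffunE. Qed.
Lemma mdeg_mvar i : mdeg (mvar i) = 1%N.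
Proof.
rewrite /mdeg (bigD1 i) //= big1 ?ffunE ?eqxx // => k /negbTE nki.
by rewrite ffunE nki.
Qed.
Lemma mdegDvar g i : mdeg (madd g (mvar i)) = (mdeg g).+1.
Proof. by rewrite mdegD mdeg_mvar addn1. Qed.
Lemma mdeg_eq0 g : mdeg g = 0%N -> g = m0.
Proof.
move=> /eqP; rewrite /mdeg sum_nat_eq0 => /forallP g0.
by apply/ffunP=> k; rewrite ffunE; move: (g0 k) => /implyP /(_ isT) /eqP.
Qed.
Lemma leq_mdeg g k : (g k <= mdeg g)%N.
Proof. by rewrite /mdeg (bigD1 k) //= leq_addr. Qed.

Lemma lexlt_irr g : lexlt g g = false.
Proof. by apply/negbTE/existsPn=> i; rewrite ltnn. Qed.

Lemma lexlt_trans g h f : lexlt g h -> lexlt h f -> lexlt g f.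
Proof.
move=> /existsP [i /andP [gi /forallP Hi]] /existsP [j /andP [hj /forallP Hj]].
apply/existsP; case: (ltngtP i j) => [ij|ji|/val_inj ij].
- exists i; apply/andP; split.
    by move: (Hj i) => /implyP /(_ ij) /eqP <-.
  apply/forallP=> k; apply/implyP=> ki.
  move: (Hi k) (Hj k) => /implyP /(_ ki) /eqP -> /implyP.
  by move=> /(_ (ltn_trans ki ij)).
- exists j; apply/andP; split.
    by move: (Hi j) => /implyP /(_ ji) /eqP ->.
  apply/forallP=> k; apply/implyP=> kj.
  move: (Hi k) (Hj k) => /implyP /(_ (ltn_trans kj ji)) /eqP -> /implyP.
  by move=> /(_ kj).
- subst j; exists i; apply/andP; split; first exact: ltn_trans gi hj.
  apply/forallP=> k; apply/implyP=> ki.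
  by move: (Hi k) (Hj k) => /implyP /(_ ki) /eqP -> /implyP /(_ ki).
Qed.

Lemma lexlt_total g h : g != h -> lexlt g h || lexlt h g.
Proof.
move=> ngh.
have [i0 Hi0] : exists i, g i != h i.
  apply/existsP; apply: contraR ngh => /existsPn gh; apply/eqP/ffunP=> k.
  by move: (gh k); rewrite negbK => /eqP.
case: (@arg_minnP _ i0 (fun i => g i != h i) (fun i : 'I_n => nat_of_ord i) Hi0) => i Hi Hmin.
have Heq (k : 'I_n) : (k < i)%N -> g k == h k.
  by move=> ki; apply: contraLR ki => Hk; rewrite -leqNgt; exact: Hmin.
case: (ltngtP (g i) (h i)) => [gh|hg|e]; last by rewrite e eqxx in Hi.
- apply/orP; left; apply/existsP; exists i; rewrite gh /=.
  by apply/forallP=> k; apply/implyP; apply: Heq.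
- apply/orP; right; apply/existsP; exists i; rewrite hg /=.
  by apply/forallP=> k; apply/implyP=> ki; rewrite eq_sym; apply: Heq.
Qed.

Lemma lexlt_add g h f : lexlt g h -> lexlt (madd g f) (madd h f).
Proof.
move=> /existsP [i /andP [gi /forallP Hi]]; apply/existsP; exists i.
rewrite !ffunE ltn_add2r gi /=; apply/forallP=> k; apply/implyP=> ki.
by rewrite !ffunE; move: (Hi k) => /implyP /(_ ki) /eqP ->.
Qed.

Lemma ltm_irr g : ltm g g = false.
Proof. by rewrite /ltm ltnn lexlt_irr andbF. Qed.

Lemma ltm_neq g h : ltm g h -> g != h.
Proof. by apply: contraTneq => ->; rewrite ltm_irr. Qed.

Lemma ltm_trans g h f : ltm g h -> ltm h f -> ltm g f.
Proof.
rewrite /ltm => /orP [gh|/andP [/eqP gh lgh]] /orP [hf|/andP [/eqP hf lhf]].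
- by rewrite (ltn_trans gh hf).
- by rewrite -hf gh.
- by rewrite gh hf.
- by rewrite gh hf eqxx (lexlt_trans lgh lhf) orbT.
Qed.

Lemma ltm_total g h : g != h -> ltm g h || ltm h g.
Proof.
move=> ngh; rewrite /ltm; case: (ltngtP (mdeg g) (mdeg h)) => //= e.
by rewrite ?e ?eqxx /=; apply: lexlt_total.
Qed.

Lemma ltm_add2r f g h : ltm g h -> ltm (madd g f) (madd h f).
Proof.
rewrite /ltm !mdegD ltn_add2r eqn_add2r => /orP [->//|/andP [-> l]].
by rewrite lexlt_add ?orbT.
Qed.

Lemma ltm_add2l f g h : ltm g h -> ltm (madd f g) (madd f h).
Proof. by rewrite ![madd f _]maddC; apply: ltm_add2r. Qed.

Lemma ltm_mdeg g h : ltm g h -> (mdeg g <= mdeg h)%N.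
Proof. by rewrite /ltm => /orP [/ltnW //|/andP [/eqP -> _]]. Qed.

Lemma mdeg_ltm g h : (mdeg g < mdeg h)%N -> ltm g h.
Proof. by rewrite /ltm => ->. Qed.

Lemma ltm_addvar g i : ltm g (madd g (mvar i)).
Proof. by apply: mdeg_ltm; rewrite mdegDvar. Qed.

Lemma lem_ltm_trans g h f : lem g h -> ltm h f -> ltm g f.
Proof. by move=> /orP [/eqP ->//|gh] hf; apply: ltm_trans gh hf. Qed.

Lemma ltm_lem_add g h f e : ltm g h -> lem f e -> ltm (madd g f) (madd h e).
Proof.
move=> gh /orP [/eqP ->|fe]; first exact: ltm_add2r.
exact: ltm_trans (ltm_add2r _ gh) (ltm_add2l _ fe).
Qed.

Lemma lem_mdeg g h : lem g h -> (mdeg g <= mdeg h)%N.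
Proof. by move=> /orP [/eqP ->//|/ltm_mdeg]. Qed.

Lemma ltm_max_seq (s : seq mono) : s != [::] ->
  exists2 a, a \in s & forall h, h \in s -> h != a -> ltm h a.
Proof.
elim: s => [//|h0 s IH] _.
have [->|ns] := eqVneq s [::].
  by exists h0; rewrite ?inE ?eqxx // => h; rewrite inE => ->.
have [a aS Ha] := IH ns.
have [e|nh] := eqVneq h0 a.
  exists a; first by rewrite inE aS orbT.
  by move=> h; rewrite inE => /orP [/eqP ->|/Ha //]; rewrite e eqxx.
case/orP: (ltm_total nh) => lt.
  exists a; first by rewrite inE aS orbT.
  by move=> h; rewrite inE => /orP [/eqP ->//|/Ha].
exists h0; first by rewrite inE eqxx.
move=> h; rewrite inE => /orP [/eqP -> //|hS nh0]; first by rewrite eqxx.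
have [->//|nha] := eqVneq h a; exact: ltm_trans (Ha h hS nha) lt.
Qed.

(* The factorisation x^g = x_j x^g' of a standard monomial. *)
Lemma mdec_min g : g != m0 -> exists j g',
  [/\ g = madd g' (mvar j), forall k : 'I_n, (k < j)%N -> g' k = 0%N
    & forall k : 'I_n, (k < j)%N -> g k = 0%N].
Proof.
move=> ng.
have [i0 gi0] : exists i, (0 < g i)%N.
  apply/existsP; apply: contraR ng => /existsPn g0; apply/eqP/ffunP=> k.
  by move: (g0 k); rewrite ffunE lt0n negbK => /eqP.
case: (@arg_minnP _ i0 (fun i => 0 < g i)%N (fun i : 'I_n => nat_of_ord i) gi0) => j gj jmin.
have gk0 (k : 'I_n) : (k < j)%N -> g k = 0%N.
  by move=> kj; apply/eqP; rewrite -leqn0 leqNgt; apply: contraL kj => /jmin; rewrite -leqNgt.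
exists j, [ffun k => if k == j then (g k).-1 else g k]; split=> //.
- apply/ffunP=> k; rewrite !ffunE.
  by case: eqP => [->|_]; rewrite ?addn1 ?prednK // addn0.
- by move=> k kj; rewrite ffunE; case: eqP => [e|_]; [move: kj; rewrite e ltnn|exact: gk0].
Qed.

Lemma mdeg_le1 g : (mdeg g <= 1)%N -> g = m0 \/ exists k, g = mvar k.
Proof.
move=> dg; have [->|ng] := eqVneq g m0; first by left.
right; have [j [g' [eg _ _]]] := mdec_min ng; exists j; rewrite eg in dg *.
by move: dg; rewrite mdegDvar ltnS leqn0 => /eqP /mdeg_eq0 ->; rewrite madd0m.
Qed.

Definition revm g : mono := [ffun k => g (rev_ord k)].

Lemma revmK : involutive revm.
Proof. by move=> g; apply/ffunP => k; rewrite !ffunE rev_ordK. Qed.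
Lemma revmD g h : revm (madd g h) = madd (revm g) (revm h).
Proof. by apply/ffunP => k; rewrite !ffunE. Qed.
Lemma revm_mvar i : revm (mvar i) = mvar (rev_ord i).
Proof.
apply/ffunP => k; rewrite !ffunE; congr (nat_of_bool _).
by apply/eqP/eqP => [<-|->]; rewrite rev_ordK.
Qed.
Lemma revm0 : revm m0 = m0.
Proof. by apply/ffunP => k; rewrite !ffunE. Qed.
Lemma mdeg_revm g : mdeg (revm g) = mdeg g.
Proof.
rewrite /mdeg [in RHS](reindex_inj rev_ord_inj) /=.
by apply: eq_bigr => k _; rewrite ffunE.
Qed.

End Exponents.

Lemma exp2_dominates d n : exists k, ((k * d).+1 ^ n < 2 ^ k)%N.
Proof.
set w := (2 * n + d + 1)%N.
have hw : (w < 2 ^ w)%N by apply: ltn_expl.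
set P := (2 ^ w)%N in hw.
have hww : (w * w < P * P)%N.
  have h1 : (w * w <= P * w)%N := leq_mul (ltnW hw) (leqnn w).
  have h2 : (P * w < P * P)%N by rewrite ltn_pmul2l //; lia.
  exact: leq_ltn_trans h1 h2.
have key : ((2 * w + d) * n < 2 ^ (2 * w))%N.
  have -> : (2 ^ (2 * w) = P * P)%N by rewrite mul2n -addnn expnD.
  apply: (leq_ltn_trans _ hww); rewrite /w; nia.
exists (2 ^ (2 * w))%N.
apply: leq_ltn_trans (_ : (2 ^ ((2 * w + d) * n) < _)%N); last by rewrite ltn_exp2l.
have -> : (2 ^ ((2 * w + d) * n) = (2 ^ (2 * w) * 2 ^ d) ^ n)%N by rewrite expnM expnD.
have leq_exp2r' (a b e : nat) : (a <= b)%N -> (a ^ e <= b ^ e)%N.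
  by case: e => [//|e]; rewrite leq_exp2r.
apply: leq_exp2r'.
have hd : (d < 2 ^ d)%N by apply: ltn_expl.
have : (1 <= 2 ^ (2 * w))%N by rewrite expn_gt0.
move: hd; set a := (2 ^ (2 * w))%N; set b := (2 ^ d)%N; nia.
Qed.

Section MonomialCount.
Variable n : nat.
Local Notation mono := {ffun 'I_n -> nat}.

Definition mons_le (m : nat) : seq mono :=
  [seq h <- [seq [ffun i => nat_of_ord (f i)] | f : {ffun 'I_n -> 'I_m.+1}]
   | (mdeg h <= m)%N].

Lemma mons_le_uniq m : uniq (mons_le m).
Proof.
apply: filter_uniq; rewrite map_inj_uniq ?enum_uniq // => f f' /ffunP e.
by apply/ffunP => i; apply: val_inj; move: (e i); rewrite !ffunE.
Qed.

Lemma mem_mons_le m h : (h \in mons_le m) = (mdeg h <= m)%N.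
Proof.
rewrite mem_filter; case: (leqP (mdeg h) m) => //= hm; apply/mapP.
exists [ffun i => (inord (h i) : 'I_m.+1)]; first by rewrite mem_enum.
apply/ffunP=> i; rewrite !ffunE inordK // ltnS.
exact: leq_trans (leq_mdeg h i) hm.
Qed.

Lemma size_mons_le m : (size (mons_le m) <= m.+1 ^ n)%N.
Proof.
rewrite size_filter; apply: leq_trans (count_size _ _) _.
by rewrite size_map -cardE card_ffun !card_ord.
Qed.

Lemma size_mons_le_gt0 m : (0 < size (mons_le m))%N.
Proof.
have : m0 n \in mons_le m by rewrite mem_mons_le mdeg0.
by case: (mons_le m).
Qed.

(* Polynomial growth: the number of monomials cannot double at every step of
   length d, since that would make it exponential. *)
Lemma mons_le_not_doubling d : exists m, (size (mons_le (m + d)) < 2 * size (mons_le m))%N.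
Proof.
have [k hk] := exp2_dominates d n.
case: (boolP [exists m : 'I_((k * d).+1), (size (mons_le (m + d)) < 2 * size (mons_le m))%N]).
  by move=> /existsP [m hm]; exists m.
move=> /existsPn doubling.
have pow2_le j : (j <= k)%N -> (2 ^ j <= size (mons_le (j * d)))%N.
  elim: j => [|j IH] jk; first by rewrite mul0n expn0 size_mons_le_gt0.
  have jd : (j * d < (k * d).+1)%N by rewrite ltnS leq_mul2r ltnW ?orbT.
  have := doubling (Ordinal jd); rewrite /= -leqNgt => h.
  rewrite mulSn addnC; apply: leq_trans h.
  by rewrite expnS leq_mul2l IH ?orbT // ltnW.
have := leq_trans (pow2_le k (leqnn k)) (size_mons_le _).
by rewrite leqNgt hk.
Qed.

End MonomialCount.

(** * Ore conditions *)

Local Open Scope ring_scope.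

Section Domains.
Variable D : nzRingType.
Hypothesis domD : is_domain D.

Lemma domain_mul_neq0 (a b : D) : a != 0 -> b != 0 -> a * b != 0.
Proof. by move=> na nb; apply/eqP => /domD [] /eqP; [rewrite (negbTE na)|rewrite (negbTE nb)]. Qed.

Lemma converse_domain : is_domain D^c.
Proof. by move=> a b /domD [] ->; [right|left]. Qed.

End Domains.

Lemma converse_left_ore (A : nzRingType) : left_ore_domain A^c -> right_ore_domain A.
Proof.
move=> [domAc oreAc]; split; last exact: oreAc.
by move=> a b ab; case: (domAc b a ab) => ->; [right|left].
Qed.

Definition left_ore_cond (D : nzRingType) :=
  forall a b : D, b != 0 -> exists p q : D, p != 0 /\ p * a = q * b.

Section LeftOreDependence.
Variable R : nzRingType.
Hypothesis domR : is_domain R.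
Hypothesis oreR : left_ore_cond R.

(* Over a left Ore domain, k vectors with fewer than k nonzero coordinates are
   left linearly dependent; this is Gaussian elimination, where the left Ore
   condition supplies the common left multiples needed to clear a column. *)
Lemma left_ore_dependent l : forall k (v : nat -> nat -> R), (l < k)%N ->
  (forall i j, (l <= j)%N -> v i j = 0) ->
  exists2 u : nat -> R, exists2 i, (i < k)%N & u i != 0 &
    forall j, \sum_(i < k) u i * v i j = 0.
Proof.
elim: l => [|l IH] k v lk vl.
  exists (fun i => if i == 0%N then 1 else 0); first by exists 0%N; rewrite ?eqxx ?oner_neq0.
  by move=> j; rewrite big1 // => i _; rewrite vl // mulr0.
case: (boolP [exists i : 'I_k, v i l != 0]) => [/existsP [i0 vi0]|/existsPn vl0].
  case: k lk i0 vi0 => [//|k] lk i0 vi0.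
  have [pq Hpq] : exists pq : nat -> R * R, forall i,
      (pq i).1 != 0 /\ (pq i).1 * v (bump i0 i) l = (pq i).2 * v i0 l.
    apply: (ClassicalEpsilon.choice (fun i pq => pq.1 != 0 /\ pq.1 * _ = pq.2 * _)) => i.
    by have [p [q [np e]]] := oreR (v (bump i0 i) l) vi0; exists (p, q).
  pose p i := (pq i).1; pose q i := (pq i).2.
  pose w i j := p i * v (bump i0 i) j - q i * v i0 j.
  have wl i j : (l <= j)%N -> w i j = 0.
    rewrite leq_eqVlt => /orP [/eqP <-|lj]; first by rewrite /w (proj2 (Hpq i)) subrr.
    by rewrite /w !vl ?(ltnW lj) // !mulr0 subr0.
  have [u' [i1 i1k nu1] Hu'] := IH k w lk wl.
  exists (fun i => if i == nat_of_ord i0 then - \sum_(i' < k) u' i' * q i'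
                   else u' (unbump i0 i) * p (unbump i0 i)).
    exists (bump i0 i1); first by move: i1k; rewrite /bump; case: (i0 <= i1)%N => /=; lia.
    rewrite [bump _ _ == _]eq_sym (negbTE (neq_bump _ _)) bumpK.
    exact: domain_mul_neq0 (proj1 (Hpq i1)).
  move=> j; rewrite (bigD1_ord i0) //= eqxx.
  rewrite [X in _ + X](eq_bigr (fun i : 'I_k => u' i * p i * v (bump i0 i) j)); last first.
    by move=> i _; rewrite eq_sym (negbTE (neq_bump _ _)) bumpK.
  rewrite mulNr addrC -[RHS](Hu' j) mulr_suml -sumrB.
  by apply: eq_bigr => i _; rewrite /w mulrBr !mulrA.
pose v' i j := if (l <= j)%N then 0 else v i j.
have v'l i j : (l <= j)%N -> v' i j = 0 by rewrite /v' => ->.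
have [u nu Hu] := IH k v' (ltnW lk) v'l.
exists u => // j; rewrite -[RHS](Hu j); apply: eq_bigr => i _; congr (_ * _); rewrite /v'.
case: (ltngtP l j) => [lj|jl|<-] /=; [by rewrite vl|by []|].
by move: (vl0 i); rewrite negbK => /eqP.
Qed.

End LeftOreDependence.

Section NoetherianOre.
Variable D : nzRingType.
Hypothesis domD : is_domain D.

Lemma ore_of_dependent_powers (a b : D) : a != 0 -> b != 0 -> forall N (s : nat -> D),
  (exists2 i, (i <= N)%N & s i != 0) ->
  \sum_(i < N.+1) s i * (b * a ^+ i) = 0 ->
  exists p q : D, p != 0 /\ p * a = q * b.
Proof.
move=> na nb; elim=> [|N IH] s [i0 i0N ns] H.
  move: i0N ns; rewrite leqn0 => /eqP -> ns.
  move: H; rewrite big_ord1 expr0 mulr1 => /domD [] e; move: ns nb; by rewrite e eqxx.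
rewrite big_ord_recl /= expr0 mulr1 in H.
set P := \sum_(i < N.+1) s i.+1 * (b * a ^+ i).
have EP : \sum_(i < N.+1) s (bump 0 i) * (b * a ^+ (bump 0 i)) = P * a.
  rewrite /P mulr_suml; apply: eq_bigr => i _.
  by rewrite /bump /= add1n exprSr !mulrA.
rewrite EP in H.
have [P0|nP] := eqVneq P 0; last first.
  by exists P, (- s 0%N); split=> //; apply/eqP; rewrite mulNr -subr_eq0 opprK addrC H.
rewrite P0 mul0r addr0 in H.
have s0 : s 0%N = 0 by case: (domD H) => // e; move: nb; rewrite e eqxx.
apply: (IH (fun i => s i.+1)) => //.
case: i0 i0N ns => [|i] iN ns; first by move: ns; rewrite s0 eqxx.
by exists i.
Qed.

Lemma left_noetherian_ore : left_noetherian D -> left_ore_cond D.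
Proof.
move=> noethD a b nb.
have [->|na] := eqVneq a 0.
  by exists 1, 0; rewrite oner_neq0 mulr0 mul0r.
pose I k (y : D) := exists r : nat -> D, y = \sum_(i < k) r i * (b * a ^+ i).
have I_ideal k : left_ideal (I k).
  split; [|split].
  - by exists (fun _ => 0); rewrite big1 // => i _; rewrite mul0r.
  - move=> y z [r1 ->] [r2 ->]; exists (fun i => r1 i + r2 i).
    by rewrite -big_split; apply: eq_bigr => i _; rewrite mulrDl.
  - move=> c y [r ->]; exists (fun i => c * r i).
    by rewrite mulr_sumr; apply: eq_bigr => i _; rewrite mulrA.
have I_incr k y : I k y -> I k.+1 y.
  move=> [r ->]; exists (fun i => if (i < k)%N then r i else 0).
  rewrite big_ord_recr /= ltnn mul0r addr0; apply: eq_bigr => i _.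
  by rewrite ltn_ord.
have [N IN] := noethD I I_ideal I_incr.
have : I N.+1 (b * a ^+ N).
  exists (fun i => if i == N then 1 else 0).
  rewrite big_ord_recr /= eqxx mul1r big1 ?add0r // => i _.
  by rewrite (ltn_eqF (ltn_ord i)) mul0r.
move=> /(IN N.+1 (leqnSn N)) [r e].
apply: (@ore_of_dependent_powers a b na nb N (fun i => if (i < N)%N then r i else -1)).
  by exists N; rewrite ?ltnn ?oppr_eq0 ?oner_neq0.
rewrite big_ord_recr /= ltnn e mulN1r.
rewrite [X in X + _](eq_bigr (fun i : 'I_N => r i * (b * a ^+ i))) ?subrr //.
by move=> i _; rewrite ltn_ord.
Qed.

End NoetherianOre.

(** * Leading terms in a skew PBW extension *)

Section PBWFrame.
Variables (R A : nzRingType) (iota : {rmorphism R -> A}) (n : nat).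
Variables (x : 'I_n -> A) (mon : {ffun 'I_n -> nat} -> A) (sig del : 'I_n -> R -> R).
Local Notation mono := {ffun 'I_n -> nat}.
Implicit Types (g h f : mono) (P Q : mono -> Prop).

Definition lspan P (a : A) := exists s : seq (R * mono),
  (forall p, p \in s -> P p.2) /\ a = \sum_(p <- s) iota p.1 * mon p.2.

Definition lower g := lspan (fun h => ltm h g).

(* The abstract shape of a skew PBW extension used in the proof: mon g stands
   for the standard monomial x^g, and only c_(j,i) <> 0 is required of the
   commutation relations. *)
Record pbw_frame : Prop := PBWFrame {
  pbw_mon0 : mon (m0 n) = 1;
  pbw_x_mon (i : 'I_n) g : (forall k : 'I_n, (k < i)%N -> g k = 0%N) ->
    x i * mon g = mon (madd g (mvar i));
  pbw_mon_x (i : 'I_n) g : (forall k : 'I_n, (i < k)%N -> g k = 0%N) ->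
    mon g * x i = mon (madd g (mvar i));
  pbw_free (s : seq mono) (c : mono -> R) : uniq s ->
    \sum_(g <- s) iota (c g) * mon g = 0 -> forall g, g \in s -> c g = 0;
  pbw_span a : lspan (fun _ => True) a;
  pbw_x_iota (i : 'I_n) r : x i * iota r = iota (sig i r) * x i + iota (del i r);
  pbw_sig_bij (i : 'I_n) : bijective (sig i);
  pbw_x_swap (i j : 'I_n) : (j < i)%N -> exists2 c, c != 0 &
    lspan (fun g => (mdeg g <= 1)%N) (x i * x j - iota c * (x j * x i))
}.

Lemma lspan0 P : lspan P 0.
Proof. by exists [::]; rewrite big_nil. Qed.

Lemma lspanD P a b : lspan P a -> lspan P b -> lspan P (a + b).
Proof.
move=> [s1 [H1 ->]] [s2 [H2 ->]]; exists (s1 ++ s2); split; last by rewrite big_cat.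
by move=> p; rewrite mem_cat => /orP [/H1|/H2].
Qed.

Lemma lspanN P a : lspan P a -> lspan P (- a).
Proof.
move=> [s [H ->]]; exists [seq (- p.1, p.2) | p <- s]; split.
  by move=> p /mapP [q /H qs ->].
by rewrite big_map -sumrN; apply: eq_bigr => p _; rewrite /= rmorphN mulNr.
Qed.

Lemma lspan_sum P (I : eqType) (r : seq I) (F : I -> A) :
  (forall i, i \in r -> lspan P (F i)) -> lspan P (\sum_(i <- r) F i).
Proof.
elim: r => [|i r IH] H; first by rewrite big_nil; apply: lspan0.
rewrite big_cons; apply: lspanD; first by apply: H; rewrite inE eqxx.
by apply: IH => j hj; apply: H; rewrite inE hj orbT.
Qed.

Lemma lspan_term P r g : P g -> lspan P (iota r * mon g).
Proof. by move=> Pg; exists [:: (r, g)]; rewrite big_seq1; split=> // p; rewrite inE => /eqP ->. Qed.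

Lemma lspan_sub P Q a : (forall g, P g -> Q g) -> lspan P a -> lspan Q a.
Proof. by move=> PQ [s [H ->]]; exists s; split=> // p /H /PQ. Qed.

Lemma lspan_iotaMl P r a : lspan P a -> lspan P (iota r * a).
Proof.
move=> [s [H ->]]; exists [seq (r * p.1, p.2) | p <- s]; split.
  by move=> p /mapP [q /H qs ->].
by rewrite big_map mulr_sumr; apply: eq_bigr => p _; rewrite /= rmorphM mulrA.
Qed.

Lemma lspan_mull P Q (y a : A) :
  (forall r g, P g -> lspan Q (y * (iota r * mon g))) -> lspan P a -> lspan Q (y * a).
Proof.
move=> H [s [Hs ->]]; rewrite mulr_sumr; apply: lspan_sum => p hp.
by apply: H; apply: Hs.
Qed.

Lemma lspan_mulr P Q (y a : A) :
  (forall r g, P g -> lspan Q ((iota r * mon g) * y)) -> lspan P a -> lspan Q (a * y).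
Proof.
move=> H [s [Hs ->]]; rewrite mulr_suml; apply: lspan_sum => p hp.
by apply: H; apply: Hs.
Qed.

Definition rspan P (a : A) := exists s : seq (R * mono),
  (forall p, p \in s -> P p.2) /\ a = \sum_(p <- s) mon p.2 * iota p.1.

Lemma rspanD P a b : rspan P a -> rspan P b -> rspan P (a + b).
Proof.
move=> [s1 [H1 ->]] [s2 [H2 ->]]; exists (s1 ++ s2); split; last by rewrite big_cat.
by move=> p; rewrite mem_cat => /orP [/H1|/H2].
Qed.

Lemma rspanN P a : rspan P a -> rspan P (- a).
Proof.
move=> [s [H ->]]; exists [seq (- p.1, p.2) | p <- s]; split.
  by move=> p /mapP [q /H qs ->].
by rewrite big_map -sumrN; apply: eq_bigr => p _; rewrite /= rmorphN mulrN.
Qed.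

Lemma rspan_sum P (I : eqType) (r : seq I) (F : I -> A) :
  (forall i, i \in r -> rspan P (F i)) -> rspan P (\sum_(i <- r) F i).
Proof.
elim: r => [|i r IH] H; first by rewrite big_nil; exists [::]; rewrite big_nil.
rewrite big_cons; apply: rspanD; first by apply: H; rewrite inE eqxx.
by apply: IH => j hj; apply: H; rewrite inE hj orbT.
Qed.

Lemma rspan_sub P Q a : (forall g, P g -> Q g) -> rspan P a -> rspan Q a.
Proof. by move=> PQ [s [H ->]]; exists s; split=> // p /H /PQ. Qed.

Lemma rspan_term P r g : P g -> rspan P (mon g * iota r).
Proof. by move=> Pg; exists [:: (r, g)]; rewrite big_seq1; split=> // p; rewrite inE => /eqP ->. Qed.

Definition coef (s : seq (R * mono)) h : R := \sum_(p <- s | p.2 == h) p.1.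

Lemma sum_terms_coef (S : seq mono) (s : seq (R * mono)) : uniq S ->
  (forall p, p \in s -> p.2 \in S) ->
  \sum_(p <- s) iota p.1 * mon p.2 = \sum_(h <- S) iota (coef s h) * mon h.
Proof.
move=> uS; elim: s => [|q s IH] H.
  by rewrite big_nil big1 // => h _; rewrite /coef big_nil rmorph0 mul0r.
rewrite big_cons IH; last by move=> p ps; apply: H; rewrite inE ps orbT.
have qS : q.2 \in S by apply: H; rewrite inE eqxx.
rewrite [in RHS](eq_bigr (fun h => iota (if q.2 == h then q.1 else 0) * mon h
                                   + iota (coef s h) * mon h)); last first.
  move=> h _; rewrite /coef big_cons.
  by case: eqP => _; rewrite ?rmorph0 ?mul0r ?add0r // rmorphD mulrDl.
rewrite big_split /=; congr (_ + _).
rewrite (bigD1_seq q.2) //= eqxx big1 ?addr0 // => h /negbTE.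
by rewrite eq_sym => ->; rewrite rmorph0 mul0r.
Qed.

Lemma lspan_coords d a : lspan (fun g => (mdeg g <= d)%N) a ->
  exists c : mono -> R, a = \sum_(h <- mons_le n d) iota (c h) * mon h.
Proof.
move=> [s [Hs ->]]; exists (coef s); apply: sum_terms_coef; first exact: mons_le_uniq.
by move=> p ps; rewrite mem_mons_le; apply: Hs.
Qed.

Section Frame.
Hypothesis domR : is_domain R.
Hypothesis F : pbw_frame.

Lemma mon_coef_eq0 r g a : lspan (fun h => h != g) a -> iota r * mon g + a = 0 -> r = 0.
Proof.
move=> [s [Hs ->]] H.
set S := undup (g :: [seq p.2 | p <- s]).
have Hin p : p \in (r, g) :: s -> p.2 \in S.
  rewrite mem_undup inE => /orP [/eqP ->|ps]; first by rewrite inE eqxx.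
  by rewrite inE; apply/orP; right; apply/mapP; exists p.
have HC : \sum_(h <- S) iota (coef ((r, g) :: s) h) * mon h = 0.
  by rewrite -(sum_terms_coef (undup_uniq _) Hin) big_cons; exact: H.
have gS : g \in S by rewrite mem_undup inE eqxx.
have := pbw_free F (undup_uniq _) HC gS.
rewrite /coef big_cons /= eqxx big1_seq ?addr0 // => p /andP [/eqP e ps].
by move: (Hs p ps); rewrite e eqxx.
Qed.

Lemma lspan_leading P a : a != 0 -> lspan P a ->
  exists r g L, [/\ r != 0, P g, lower g L & a = iota r * mon g + L].
Proof.
move=> na [s [Hs ea]].
set S := undup [seq p.2 | p <- s].
set S' := [seq h <- S | coef s h != 0].
have ea' : a = \sum_(h <- S') iota (coef s h) * mon h.
  rewrite ea (@sum_terms_coef S) ?undup_uniq // => [|p ps]; last first.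
    by rewrite mem_undup; apply/mapP; exists p.
  rewrite /S' big_filter [in RHS]big_mkcond /=; apply: eq_bigr => h _.
  by case: eqP => // ->; rewrite rmorph0 mul0r.
have nS' : S' != [::] by apply: contra na => /eqP e; rewrite ea' e big_nil.
have [al alS Hal] := ltm_max_seq nS'.
have uS' : uniq S' by apply: filter_uniq; apply: undup_uniq.
exists (coef s al), al, (\sum_(h <- S' | h != al) iota (coef s h) * mon h); split.
- by move: alS; rewrite mem_filter => /andP [].
- by move: alS; rewrite mem_filter mem_undup => /andP [_ /mapP [p ps ->]]; exact: Hs.
- rewrite -big_filter; apply: lspan_sum => h.
  by rewrite mem_filter => /andP [nh hS]; apply: lspan_term; apply: Hal.
- by rewrite ea' (bigD1_seq al).
Qed.

Lemma mon_mvar k : mon (mvar k) = x k.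
Proof.
have := @pbw_x_mon F k (m0 n) (fun kk _ => ffunE _ _).
by rewrite (pbw_mon0 F) mulr1 madd0m.
Qed.

Lemma x_iotaMl j r (a : A) :
  x j * (iota r * a) = iota (sig j r) * (x j * a) + iota (del j r) * a.
Proof. by rewrite mulrA (pbw_x_iota F) mulrDl !mulrA. Qed.

Lemma sig0 i : sig i 0 = 0.
Proof.
have := pbw_x_iota F i 0; rewrite rmorph0 mulr0 -mon_mvar.
rewrite -[iota (del i 0)]mulr1 -(pbw_mon0 F) => /esym.
apply: mon_coef_eq0; apply: lspan_term.
by apply/eqP => /(congr1 (@mdeg n)); rewrite mdeg_mvar mdeg0.
Qed.

Lemma sig_neq0 i r : r != 0 -> sig i r != 0.
Proof.
by apply: contra => /eqP e; apply/eqP/(bij_inj (pbw_sig_bij F i)); rewrite e sig0.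
Qed.

Definition x_lead g i := exists c L, [/\ c != 0, lower (madd g (mvar i)) L &
  x i * mon g = iota c * mon (madd g (mvar i)) + L].

Lemma lower_mdeg g L : lower g L -> lspan (fun h => (mdeg h <= mdeg g)%N) L.
Proof. by apply: lspan_sub => h /ltm_mdeg. Qed.

Lemma x_lead_mdeg g k : x_lead g k ->
  lspan (fun h => (mdeg h <= (mdeg g).+1)%N) (x k * mon g).
Proof.
move=> [c [L [_ /lower_mdeg HL ->]]]; rewrite -(mdegDvar g k).
by apply: lspanD => //; apply: lspan_term.
Qed.

Lemma x_lower j h L : (forall f, ltm f h -> x_lead f j) -> lower h L ->
  lower (madd h (mvar j)) (x j * L).
Proof.
move=> lead_below; apply: lspan_mull => r f fh.
rewrite x_iotaMl; have [c [L' [_ HL' ->]]] := lead_below f fh.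
rewrite mulrDr mulrA -rmorphM.
apply: lspanD; first apply: lspanD.
- exact/lspan_term/ltm_add2r.
- apply: lspan_iotaMl; apply: lspan_sub HL' => z zf.
  exact: ltm_trans zf (ltm_add2r _ fh).
- exact/lspan_term/(ltm_trans fh (ltm_addvar _ _)).
Qed.

Lemma lspan_mdeg1_mul g S : lspan (fun f => (mdeg f <= 1)%N) S ->
  (forall k, x_lead g k) -> lspan (fun h => (mdeg h <= (mdeg g).+1)%N) (S * mon g).
Proof.
move=> HS lead_g; apply: lspan_mulr HS => r f /mdeg_le1 [->|[k ->]].
  by rewrite (pbw_mon0 F) mulr1; apply: lspan_term.
by rewrite mon_mvar -mulrA; apply/lspan_iotaMl/x_lead_mdeg.
Qed.

(* The inductive step: for j < i, rewrite x_i x_j = c x_j x_i + (terms of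
   degree <= 1) and push x_i, then x_j, through x^g'. *)
Lemma x_lead_swap (i j : 'I_n) g' c0 S1 : (j < i)%N ->
  (forall k : 'I_n, (k < j)%N -> g' k = 0%N) ->
  c0 != 0 -> lspan (fun f => (mdeg f <= 1)%N) S1 ->
  x i * x j = iota c0 * (x j * x i) + S1 ->
  (forall k, x_lead g' k) ->
  (forall f, ltm f (madd g' (mvar i)) -> x_lead f j) ->
  x_lead (madd g' (mvar j)) i.
Proof.
move=> ji g'j nc0 HS1 eS1 lead_g' lead_below.
set g := madd g' (mvar j); set h := madd g' (mvar i).
have hj (k : 'I_n) : (k < j)%N -> h k = 0%N.
  move=> kj; rewrite ffunE g'j // ffunE; case: eqP => // e.
  by move: kj; rewrite e => /(ltn_trans ji); rewrite ltnn.
have ehg : madd h (mvar j) = madd g (mvar i).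
  by rewrite /h /g -maddA (maddC (mvar i)) maddA.
have [c1 [L1 [nc1 HL1 e1]]] := lead_g' i.
exists (c0 * sig j c1), (iota c0 * (iota (del j c1) * mon h + x j * L1) + S1 * mon g').
split.
- exact/domain_mul_neq0/sig_neq0.
- apply: lspanD; first apply/lspan_iotaMl/lspanD.
  + by apply: lspan_term; rewrite -ehg; apply: ltm_addvar.
  + by rewrite -ehg; apply: x_lower HL1.
  + apply: lspan_sub (lspan_mdeg1_mul HS1 lead_g') => f fd.
    by apply: mdeg_ltm; rewrite !mdegDvar ltnS.
rewrite /g -(pbw_x_mon F g'j) mulrA eS1 mulrDl -!mulrA e1 mulrDr x_iotaMl.
by rewrite (pbw_x_mon F hj) ehg rmorphM -(addrA (iota (sig j c1) * _)) mulrDr mulrA -addrA.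
Qed.

Lemma x_leadP g i : x_lead g i.
Proof.
have [N] := ubnP (mdeg g * n + i)%N; elim: N g i => [//|N IH] g i.
rewrite ltnS => gN.
case: (boolP [forall k : 'I_n, (k < i)%N ==> (g k == 0%N)]) => [/forallP g0|].
  exists 1, 0; split; [exact: oner_neq0 | exact: lspan0 |].
  rewrite rmorph1 mul1r addr0; apply: (pbw_x_mon F) => k ki.
  by move: (g0 k) => /implyP /(_ ki) /eqP.
rewrite negb_forall => /existsP [k0]; rewrite negb_imply => /andP [k0i gk0].
have [j [g' [eg g'j gj]]] : exists j g', [/\ g = madd g' (mvar j),
    forall k : 'I_n, (k < j)%N -> g' k = 0%N & forall k : 'I_n, (k < j)%N -> g k = 0%N].
  by apply: mdec_min; apply: contra gk0 => /eqP ->; rewrite ffunE.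
have ji : (j < i)%N.
  rewrite ltnNge; apply: contra gk0 => ij; apply/eqP/gj.
  exact: leq_trans k0i ij.
have [c0 nc0 HS] := pbw_x_swap F ji.
rewrite eg in gN *; rewrite mdegDvar in gN.
apply: (x_lead_swap ji g'j nc0 HS); first by rewrite addrC subrK.
- by move=> k; apply: IH; move: gN (ltn_ord i) (ltn_ord k); nia.
- move=> f /ltm_mdeg; rewrite mdegDvar => fd; apply: IH.
  by move: gN fd ji (ltn_ord i); nia.
Qed.

Lemma x_lower_mon j h L : lower h L -> lower (madd h (mvar j)) (x j * L).
Proof. by apply: x_lower => f _; apply: x_leadP. Qed.

Lemma mon_iota_mon_lead g h r : exists t L, [/\ r != 0 -> t != 0, lower (madd g h) L &
  mon g * (iota r * mon h) = iota t * mon (madd g h) + L].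
Proof.
have [N] := ubnP (mdeg g); elim: N g => [//|N IH] g; rewrite ltnS => gN.
have [->|ng] := eqVneq g (m0 n).
  exists r, 0; split=> //; first exact: lspan0.
  by rewrite (pbw_mon0 F) mul1r madd0m addr0.
have [j [g' [eg g'j _]]] := mdec_min ng.
rewrite eg mdegDvar in gN.
have [t' [L' [nt' HL' e']]] := IH g' gN.
have [c [L'' [nc HL'' e'']]] := x_leadP (madd g' h) j.
have egh : madd (madd g' h) (mvar j) = madd g h.
  by rewrite eg -maddA (maddC h) maddA.
exists (sig j t' * c),
  (iota (sig j t') * L'' + iota (del j t') * mon (madd g' h) + x j * L').
split.
- by move=> /nt' ?; apply/domain_mul_neq0/nc/sig_neq0.
- rewrite -egh; apply: lspanD; first apply: lspanD.
  + exact: lspan_iotaMl.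
  + exact/lspan_term/ltm_addvar.
  + exact: x_lower_mon.
rewrite eg -(pbw_x_mon F g'j) -mulrA e' mulrDr x_iotaMl e'' egh.
by rewrite mulrDr mulrA -rmorphM !addrA -eg.
Qed.

Lemma lspan_mul P Q a b : lspan P a -> lspan Q b ->
  lspan (fun f => exists g h, [/\ P g, Q h & lem f (madd g h)]) (a * b).
Proof.
move=> Ha [s [Hs ->]]; apply: lspan_mulr Ha => r g Pg.
rewrite mulr_sumr; apply: lspan_sum => p ps.
have [t [L [_ HL e]]] := mon_iota_mon_lead g p.2 p.1.
rewrite -mulrA e mulrDr mulrA -rmorphM; apply: lspanD.
  by apply: lspan_term; exists g, p.2; split=> //; [exact: Hs|rewrite /lem eqxx].
apply: lspan_iotaMl; apply: lspan_sub HL => f fgh; exists g, p.2; split=> //.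
  exact: Hs.
by rewrite /lem fgh orbT.
Qed.

Lemma pbw_domain : is_domain A.
Proof.
move=> a b ab; have [->|na] := eqVneq a 0; first by left.
have [->|nb] := eqVneq b 0; first by right.
exfalso.
have [r [g [La [nr _ HLa ea]]]] := lspan_leading na (pbw_span F a).
have [s [h [Lb [ns _ HLb eb]]]] := lspan_leading nb (pbw_span F b).
have [t [L [nt HL eK]]] := mon_iota_mon_lead g h s.
have Hb : lspan (fun f => lem f h) b.
  rewrite eb; apply: lspanD; first by apply: lspan_term; rewrite /lem eqxx.
  by apply: lspan_sub HLb => f fh; rewrite /lem fh orbT.
have Hrest : lower (madd g h) (iota r * L + (iota r * mon g) * Lb + La * b).
  apply: lspanD; first apply: lspanD.
  - exact: lspan_iotaMl.
  - apply: lspan_sub (lspan_mul (@lspan_term (eq^~ g) r g erefl) HLb).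
    move=> f [_ [h' [-> h'h fgh]]].
    exact: lem_ltm_trans fgh (ltm_add2l _ h'h).
  - apply: lspan_sub (lspan_mul HLa Hb) => f [g' [h' [g'g h'h fgh]]].
    exact: lem_ltm_trans fgh (ltm_lem_add g'g h'h).
have E : a * b = iota (r * t) * mon (madd g h) +
    (iota r * L + (iota r * mon g) * Lb + La * b).
  rewrite {1}ea {1}eb mulrDl mulrDr -mulrA eK mulrDr mulrA -rmorphM.
  by rewrite -eb !addrA.
have := mon_coef_eq0 (lspan_sub (fun f => @ltm_neq _ f _) Hrest) (etrans (esym E) ab).
by apply/eqP; apply/domain_mul_neq0/nt.
Qed.

Lemma lspan_mdeg_bound a : exists d, lspan (fun g => (mdeg g <= d)%N) a.
Proof.
have [s [_ ->]] := pbw_span F a.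
exists (\max_(p <- s) mdeg p.2), s; split=> // p ps.
exact: (leq_bigmax_seq _ ps).
Qed.

Lemma lspan_mul_mdeg d e a b : lspan (fun g => (mdeg g <= d)%N) a ->
  lspan (fun g => (mdeg g <= e)%N) b -> lspan (fun g => (mdeg g <= d + e)%N) (a * b).
Proof.
move=> Ha Hb; apply: lspan_sub (lspan_mul Ha Hb) => f [g [h [gd he /lem_mdeg]]].
by rewrite mdegD => fgh; apply: leq_trans fgh (leq_add gd he).
Qed.

Definition mons_comb (T : seq mono) (w : nat -> R) : A :=
  \sum_(i < size T) iota (w i) * mon (nth (m0 n) T i).

Lemma mons_comb_eq0 (T : seq mono) w : uniq T -> mons_comb T w = 0 ->
  forall i, (i < size T)%N -> w i = 0.
Proof.
move=> uT T0 i iT.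
have E : \sum_(h <- T) iota (w (index h T)) * mon h = 0.
  rewrite (big_nth (m0 n)) big_mkord -[RHS]T0; apply: eq_bigr => j _.
  by rewrite index_uniq.
by have := pbw_free F uT E (mem_nth (m0 n) iT); rewrite index_uniq.
Qed.

(* Dimension count: the 2 |mons_le m| products x^g a and x^g b (mdeg g <= m)
   live in the span of fewer than 2 |mons_le m| monomials. *)
Lemma mons_comb_dependent d m a b : left_ore_cond R ->
  lspan (fun g => (mdeg g <= d)%N) a -> lspan (fun g => (mdeg g <= d)%N) b ->
  (size (mons_le n (m + d)) < 2 * size (mons_le n m))%N ->
  exists u v : nat -> R,
    [\/ exists2 i, (i < size (mons_le n m))%N & u i != 0
      | exists2 i, (i < size (mons_le n m))%N & v i != 0] /\
    mons_comb (mons_le n m) u * a + mons_comb (mons_le n m) v * b = 0.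
Proof.
move=> oreR Ha Hb growth.
set T := mons_le n m; set S := mons_le n (m + d); set N := size T.
pose el i := if (i < N)%N then mon (nth (m0 n) T i) * a else mon (nth (m0 n) T (i - N)) * b.
have Tmon j : lspan (fun g => (mdeg g <= m)%N) (mon (nth (m0 n) T j)).
  rewrite -[mon _]mul1r -(rmorph1 iota); apply: lspan_term.
  by case: (ltnP j N) => jT; [rewrite -mem_mons_le mem_nth | rewrite nth_default ?mdeg0].
have Hel i : exists c : mono -> R, el i = \sum_(h <- S) iota (c h) * mon h.
  by apply: lspan_coords; rewrite /el; case: ifP => _; apply: lspan_mul_mdeg.
have [cf Hcf] := ClassicalEpsilon.choice _ Hel.
pose col i j := if (j < size S)%N then cf i (nth (m0 n) S j) else 0.
have col0 i j : (size S <= j)%N -> col i j = 0 by rewrite /col leqNgt => /negbTE ->.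
have lk : (size S < N + N)%N by rewrite addnn -mul2n.
have [u [i0 i0k nu0] Hu] := left_ore_dependent domR oreR lk col0.
exists u, (fun i => u (N + i)%N); split.
  case: (ltnP i0 N) => i0N; [left; exists i0 | right; exists (i0 - N)%N] => //.
    by move: i0k; rewrite /N; lia.
  by rewrite subnKC.
have -> : mons_comb T u * a + mons_comb T (fun i => u (N + i)%N) * b =
    \sum_(i < N + N) iota (u i) * el i.
  rewrite big_split_ord /= /mons_comb !mulr_suml.
  congr (_ + _); apply: eq_bigr => i _; rewrite /el -mulrA.
    by rewrite ltn_ord.
  by rewrite ltnNge leq_addr /= addKn.
under eq_bigr => i _ do rewrite Hcf mulr_sumr.
rewrite exchange_big /= (big_nth (m0 n)) big_mkord big1 // => j _.
under eq_bigr => i _ do rewrite mulrA -rmorphM.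
rewrite -mulr_suml -rmorph_sum.
have -> : \sum_(i < N + N) u i * cf i (nth (m0 n) S j) = 0.
  by rewrite -[RHS](Hu j); apply: eq_bigr => i _; rewrite /col ltn_ord.
by rewrite rmorph0 mul0r.
Qed.

Lemma pbw_left_ore : left_ore_cond R -> left_ore_domain A.
Proof.
move=> oreR; split; first exact: pbw_domain.
move=> a b nb.
have [da Ha] := lspan_mdeg_bound a; have [db Hb] := lspan_mdeg_bound b.
have [m growth] := mons_le_not_doubling n (maxn da db).
have [u [v [nuv E]]] := mons_comb_dependent oreR
  (lspan_sub (fun g gd => leq_trans gd (leq_maxl da db)) Ha)
  (lspan_sub (fun g gd => leq_trans gd (leq_maxr da db)) Hb) growth.
set T := mons_le n m in nuv E.
exists (mons_comb T u), (- mons_comb T v); split; last first.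
  by apply/eqP; rewrite mulNr -addr_eq0 E.
move=> u0; move: E; rewrite u0 mul0r add0r => /pbw_domain [v0|/nb //].
by case: nuv => [[i iT]|[i iT]]; rewrite (mons_comb_eq0 (mons_le_uniq n m) _ iT) ?eqxx.
Qed.

Lemma mon_iota_lead g r : exists t L, [/\ r != 0 -> t != 0, lower g L &
  mon g * iota r = iota t * mon g + L].
Proof.
have [t [L [nt HL e]]] := mon_iota_mon_lead g (m0 n) r.
exists t, L; rewrite maddm0 (pbw_mon0 F) mulr1 in HL e.
by split.
Qed.

Lemma pbw_free_right (s : seq mono) (c : mono -> R) : uniq s ->
  \sum_(g <- s) mon g * iota (c g) = 0 -> forall g, g \in s -> c g = 0.
Proof.
move=> us s0 g gs; apply/eqP/negP => /negP ncg.
set s' := [seq f <- s | c f != 0].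
have s'0 : \sum_(f <- s') mon f * iota (c f) = 0.
  rewrite -[RHS]s0 /s' big_filter [in LHS]big_mkcond /=; apply: eq_bigr => f _.
  by case: eqP => // ->; rewrite rmorph0 mulr0.
have gs' : g \in s' by rewrite mem_filter ncg gs.
have ns' : s' != [::] by case: (s') gs'.
have [h hs' hmax] := ltm_max_seq ns'.
have nch : c h != 0 by move: hs'; rewrite mem_filter => /andP [].
rewrite (bigD1_seq h) ?filter_uniq //= in s'0.
have [t [L [nt HL e]]] := mon_iota_lead h (c h).
rewrite e -addrA in s'0.
have Hrest : lower h (L + \sum_(f <- s' | f != h) mon f * iota (c f)).
  apply: lspanD => //; rewrite -big_filter; apply: lspan_sum => f.
  rewrite mem_filter => /andP [nfh fs'].
  have [t' [L' [_ HL' ->]]] := mon_iota_lead f (c f).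
  apply: lspanD; first exact/lspan_term/hmax.
  by apply: lspan_sub HL' => z zf; apply: ltm_trans zf (hmax f fs' nfh).
have := mon_coef_eq0 (lspan_sub (fun f => @ltm_neq _ f _) Hrest) s'0.
by move=> t0; move: (nt nch); rewrite t0 eqxx.
Qed.

Lemma sig_inverse : exists si : 'I_n -> R -> R,
  forall i, cancel (sig i) (si i) /\ cancel (si i) (sig i).
Proof.
have inv i : exists f : R -> R, cancel (sig i) f /\ cancel f (sig i).
  by case: (pbw_sig_bij F i) => f sK fK; exists f.
exact: ClassicalEpsilon.choice inv.
Qed.

Section RightModule.
Variable si : 'I_n -> R -> R.
Hypothesis siK : forall i, cancel (si i) (sig i).

Lemma iota_x i r : iota r * x i = x i * iota (si i r) - iota (del i (si i r)).
Proof. by rewrite (pbw_x_iota F) siK addrK. Qed.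

Lemma mon_iota_rlead g r' : exists r L, lspan (fun h => (mdeg h < mdeg g)%N) L /\
  mon g * iota r = iota r' * mon g + L.
Proof.
have [N] := ubnP (mdeg g); elim: N g r' => [//|N IH] g r'; rewrite ltnS => gN.
have [->|ng] := eqVneq g (m0 n).
  by exists r', 0; split; [apply: lspan0 | rewrite (pbw_mon0 F) mul1r mulr1 addr0].
have [j [g' [eg g'j _]]] := mdec_min ng.
rewrite eg mdegDvar in gN *.
have [r [L' [HL' e']]] := IH g' (si j r') gN.
exists r, (iota (del j (si j r')) * mon g' + x j * L'); split.
  apply: lspanD; first exact: lspan_term.
  have Hx : lspan (eq^~ (mvar j)) (x j).
    by rewrite -mon_mvar -[mon _]mul1r -(rmorph1 iota); apply: lspan_term.
  apply: lspan_sub (lspan_mul Hx HL') => f [_ [h [-> hd /lem_mdeg]]].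
  by rewrite mdegD mdeg_mvar add1n => /leq_ltn_trans; apply.
rewrite -(pbw_x_mon F g'j) -mulrA e' mulrDr x_iotaMl siK.
by rewrite (pbw_x_mon F g'j) addrA.
Qed.

Lemma lspan_rspan d a : lspan (fun g => (mdeg g < d)%N) a -> rspan (fun g => (mdeg g < d)%N) a.
Proof.
elim: d a => [|d IH] a [s [Hs ->]].
  by case: s Hs => [|p s] Hs; [exists [::]; rewrite !big_nil | have := Hs p (mem_head _ _)].
apply: rspan_sum => p ps.
have [r [L [HL e]]] := mon_iota_rlead p.2 p.1.
have -> : iota p.1 * mon p.2 = mon p.2 * iota r - L by rewrite e addrK.
apply: rspanD; first exact/rspan_term/Hs.
apply/rspanN/rspan_sub/IH; last first.
  by apply: lspan_sub HL => g /leq_trans; apply; have := Hs p ps.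
by move=> g /ltnW.
Qed.

End RightModule.
End Frame.
End PBWFrame.

(** * The converse extension *)

Section ConverseMorphism.
Variables (R A : nzRingType) (f : {rmorphism R -> A}).

Definition conv_rmorph : R^c -> A^c := f.

HB.instance Definition _ := GRing.isZmodMorphism.Build R^c A^c conv_rmorph (rmorphB f).
HB.instance Definition _ := GRing.isMonoidMorphism.Build R^c A^c conv_rmorph
  (rmorph1 f, fun r s => rmorphM f s r).

End ConverseMorphism.

Section Converse.
Variables (R A : nzRingType) (iota : {rmorphism R -> A}) (n : nat).
Variables (x : 'I_n -> A) (mon : {ffun 'I_n -> nat} -> A) (sig del si : 'I_n -> R -> R).
Hypothesis domR : is_domain R.
Hypothesis F : pbw_frame iota x mon sig del.
Hypotheses (sigK : forall i, cancel (sig i) (si i)) (siK : forall i, cancel (si i) (sig i)).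
Local Notation mono := {ffun 'I_n -> nat}.
Local Notation iotac := (conv_rmorph iota : {rmorphism R^c -> A^c}).
Local Notation xc := (fun k => x (rev_ord k) : A^c).
Local Notation monc := (fun g => mon (revm g) : A^c).

Lemma rspan_conv P a : rspan iota mon (fun g => P (revm g)) a -> @lspan R^c A^c iotac n monc P a.
Proof.
move=> [s [Hs ->]]; exists [seq (p.1, revm p.2) | p <- s]; split.
  by move=> p /mapP [q /Hs qs ->].
by rewrite big_map; apply: eq_bigr => p _ /=; rewrite revmK.
Qed.

Lemma conv_x_mon (i : 'I_n) (g : mono) : (forall k : 'I_n, (k < i)%N -> g k = 0%N) ->
  xc i * monc g = monc (madd g (mvar i)).
Proof.
move=> gi; rewrite /= revmD revm_mvar; apply: (pbw_mon_x F) => k ki; rewrite ffunE.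
by apply: gi; move: ki (ltn_ord i) (ltn_ord k) => /=; lia.
Qed.

Lemma conv_mon_x (i : 'I_n) (g : mono) : (forall k : 'I_n, (i < k)%N -> g k = 0%N) ->
  monc g * xc i = monc (madd g (mvar i)).
Proof.
move=> gi; rewrite /= revmD revm_mvar; apply: (pbw_x_mon F) => k ki; rewrite ffunE.
by apply: gi; move: ki (ltn_ord i) (ltn_ord k) => /=; lia.
Qed.

Lemma conv_free (s : seq mono) (c : mono -> R) : uniq s ->
  \sum_(g <- s) iotac (c g) * monc g = 0 -> forall g, g \in s -> c g = 0.
Proof.
move=> us s0 g gs.
rewrite -[g]revmK.
apply: (@pbw_free_right _ _ _ _ _ _ _ _ domR F [seq revm h | h <- s] (fun h => c (revm h))).
- by rewrite map_inj_uniq //; apply: (can_inj (@revmK n)).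
- by rewrite big_map -[RHS]s0; apply: eq_bigr => h _ /=; rewrite revmK.
- by apply/mapP; exists g.
Qed.

Lemma conv_span a : @lspan R^c A^c iotac n monc (fun _ => True) a.
Proof.
apply: rspan_conv; have [d Hd] := lspan_mdeg_bound F (a : A).
by have [s [_ ->]] := lspan_rspan domR F siK (Hd : lspan _ _ (fun g => (mdeg g < d.+1)%N) _); exists s.
Qed.

Lemma conv_x_iota (i : 'I_n) (r : R^c) :
  xc i * iotac r = iotac (si (rev_ord i) r) * xc i + iotac (- del (rev_ord i) (si (rev_ord i) r)).
Proof.
change (iota r * x (rev_ord i) = x (rev_ord i) * iota (si (rev_ord i) r)
  + iota (- del (rev_ord i) (si (rev_ord i) r))).
by rewrite rmorphN (iota_x F siK).
Qed.

Lemma conv_x_swap (i j : 'I_n) : (j < i)%N -> exists2 c : R^c, c != 0 &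
  @lspan R^c A^c iotac n monc (fun g => (mdeg g <= 1)%N) (xc i * xc j - iotac c * (xc j * xc i)).
Proof.
move=> ji; set I := rev_ord i; set J := rev_ord j.
have IJ : (I < J)%N by rewrite /I /J /=; move: ji (ltn_ord i); lia.
have [c0 nc0 HS] := pbw_x_swap F IJ.
set u := si I c0; set w := si J u.
exists w.
  apply: contra nc0 => /eqP w0.
  by rewrite -(siK I c0) -/u -(siK J u) -/w w0 !(sig0 F).
apply: rspan_conv.
change (rspan iota mon (fun g => (mdeg (revm g) <= 1)%N) (x J * x I - x I * x J * iota w)).
apply: (rspan_sub (P := fun g => (mdeg g < 2)%N)) => [g|]; first by rewrite mdeg_revm.
apply: (lspan_rspan domR F siK).
have e1 : iota c0 * (x I * x J) =
    x I * x J * iota w - (x I * iota (del J w) + iota (del I u) * x J).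
  rewrite mulrA (iota_x F siK) mulrBl -/u -[x I * _ * x J]mulrA.
  by rewrite [iota u * _](iota_x F siK) mulrBr mulrA -addrA -opprD.
have -> : x J * x I - x I * x J * iota w =
    (x J * x I - iota c0 * (x I * x J)) - (x I * iota (del J w) + iota (del I u) * x J).
  by rewrite e1 opprB addrA addrAC addrK.
have Hdeg1 r k : lspan iota mon (fun g => (mdeg g <= 1)%N) (iota r * x k).
  by rewrite -(mon_mvar F); apply: lspan_term; rewrite mdeg_mvar.
apply: lspanD => //; apply/lspanN/lspanD; last exact: Hdeg1.
rewrite (pbw_x_iota F); apply: lspanD; first exact: Hdeg1.
by rewrite -[iota _]mulr1 -(pbw_mon0 F); apply: lspan_term; rewrite mdeg0.
Qed.

Lemma pbw_frame_converse : @pbw_frame R^c A^c iotac n xc monc (fun i => si (rev_ord i))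
  (fun i r => - del (rev_ord i) (si (rev_ord i) r)).
Proof.
split.
- by rewrite /= revm0 (pbw_mon0 F).
- exact: conv_x_mon.
- exact: conv_mon_x.
- exact: conv_free.
- exact: conv_span.
- exact: conv_x_iota.
- by move=> i; exists (sig (rev_ord i)).
- exact: conv_x_swap.
Qed.

End Converse.

(** * Standard monomials *)

Section StandardMonomials.
Variable A : nzRingType.

Lemma monomial_recl n (x : 'I_n.+1 -> A) (g : {ffun 'I_n.+1 -> nat}) :
  monomial x g = x ord0 ^+ g ord0 *
    monomial (fun k => x (lift ord0 k)) [ffun k => g (lift ord0 k)].
Proof. by rewrite /monomial big_ord_recl; congr (_ * _); apply: eq_bigr => k _; rewrite ffunE. Qed.

Lemma monomial_recr n (x : 'I_n.+1 -> A) (g : {ffun 'I_n.+1 -> nat}) :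
  monomial x g = monomial (fun k => x (widen_ord (leqnSn n) k))
                   [ffun k => g (widen_ord (leqnSn n) k)] * x ord_max ^+ g ord_max.
Proof. by rewrite /monomial big_ord_recr; congr (_ * _); apply: eq_bigr => k _; rewrite ffunE. Qed.

Lemma monomial0 n (x : 'I_n -> A) : monomial x (m0 n) = 1.
Proof. by rewrite /monomial big1 // => k _; rewrite ffunE expr0. Qed.

Lemma x_mul_monomial n (x : 'I_n -> A) (i : 'I_n) (g : {ffun 'I_n -> nat}) :
  (forall k : 'I_n, (k < i)%N -> g k = 0%N) ->
  x i * monomial x g = monomial x (madd g (mvar i)).
Proof.
elim: n x i g => [|n IH] x i g gi; first by move: (ltn_ord i).
rewrite !monomial_recl.
case: (unliftP ord0 i) => [i' ei|ei]; subst i.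
- have g0 : g ord0 = 0%N by apply: gi; rewrite lift0.
  rewrite !ffunE g0 /= !expr0 !mul1r.
  have -> : [ffun k => madd g (mvar (lift ord0 i')) (lift ord0 k)] =
            madd [ffun k => g (lift ord0 k)] (mvar i').
    by apply/ffunP => k; rewrite !ffunE (inj_eq (@lift_inj _ ord0)).
  by apply: IH => k ki; rewrite ffunE; apply: gi; rewrite lift0 ltnS.
- rewrite mulrA -exprS !ffunE eqxx addn1; congr (_ * monomial _ _).
  by apply/ffunP => k; rewrite !ffunE [lift _ _ == _]eq_sym (negbTE (neq_lift _ _)) addn0.
Qed.

Lemma monomial_mul_x n (x : 'I_n -> A) (i : 'I_n) (g : {ffun 'I_n -> nat}) :
  (forall k : 'I_n, (i < k)%N -> g k = 0%N) ->
  monomial x g * x i = monomial x (madd g (mvar i)).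
Proof.
elim: n x i g => [|n IH] x i g gi; first by move: (ltn_ord i).
rewrite !monomial_recr.
have [->|ni] := eqVneq i ord_max.
  rewrite -mulrA -exprSr !ffunE eqxx addn1; congr (monomial _ _ * _).
  apply/ffunP => k; rewrite !ffunE.
  have -> : (widen_ord (leqnSn n) k == ord_max) = false.
    by apply/negbTE; rewrite -(inj_eq val_inj) /= neq_ltn ltn_ord.
  by rewrite addn0.
have i_n : (i < n)%N.
  by move: (ltn_ord i) ni; rewrite ltnS leq_eqVlt -(inj_eq val_inj) => /orP [->|].
set i' := Ordinal i_n.
have ei : i = widen_ord (leqnSn n) i' by apply: val_inj.
rewrite !ffunE gi // eq_sym (negbTE ni) /= !expr0 !mulr1.
have -> : [ffun k => madd g (mvar i) (widen_ord (leqnSn n) k)] =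
          madd [ffun k => g (widen_ord (leqnSn n) k)] (mvar i').
  by apply/ffunP => k; rewrite !ffunE ei; congr (_ + nat_of_bool _).
by rewrite ei; apply: IH => k ki; rewrite ffunE; apply: gi; rewrite ei.
Qed.

Lemma monomial_mvar n (x : 'I_n -> A) (k : 'I_n) : monomial x (mvar k) = x k.
Proof.
have := @x_mul_monomial n x k (m0 n) (fun kk _ => ffunE _ _).
by rewrite monomial0 mulr1 madd0m.
Qed.

End StandardMonomials.

Lemma bijective_skew_PBW_frame (R A : nzRingType) (iota : {rmorphism R -> A})
    (n : nat) (x : 'I_n -> A) :
  bijective_skew_PBW iota x -> exists sig del, pbw_frame iota x (monomial x) sig del.
Proof.
move=> [[_ [gen [free [_ rel4]]]] [[sig [del [rel3 sig_bij]]] _]].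
exists sig, del; split=> //.
- exact: monomial0.
- exact: x_mul_monomial.
- exact: monomial_mul_x.
- move=> a; have [s [c [_ ->]]] := gen a.
  by exists [seq (c g, g) | g <- s]; rewrite big_map.
- move=> i j _; have [c [d0 [d [/eqP nc e]]]] := rel4 j i.
  exists c => //.
  exists ((d0, m0 n) :: [seq (d k, mvar k) | k <- index_enum 'I_n]); split.
    move=> p; rewrite inE => /orP [/eqP -> | /mapP [k _ ->]] /=.
      by rewrite mdeg0.
    by rewrite mdeg_mvar.
  rewrite mulrA e big_cons big_map /= monomial0 mulr1; congr (_ + _).
  by apply: eq_bigr => k _; rewrite monomial_mvar.
Qed.

Theorem proposition3p1 (R A : nzRingType) (iota : {rmorphism R -> A})
    (n : nat) (x : 'I_n -> A) :
  is_domain R -> bijective_skew_PBW iota x ->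
  (left_noetherian R -> left_ore_domain A) /\
  (right_noetherian R -> right_ore_domain A).
Proof.
move=> domR /bijective_skew_PBW_frame [sig [del F]]; split.
  by move/(left_noetherian_ore domR)/(pbw_left_ore domR F).
(* right_noetherian R is left_noetherian R^c by conversion. *)
move=> /(left_noetherian_ore (converse_domain domR)) oreRc.
have [si /all_and2 [sigK siK]] := sig_inverse F.
apply/converse_left_ore/(pbw_left_ore (converse_domain domR) _ oreRc).
exact: pbw_frame_converse domR F sigK siK.
Qed.
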